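(* Let $X$ be a finite almost simple group with socle $S=\mathrm{soc}(X)$. Then $\sigma(X)\geq 3$.
   Context: $\sigma(X)$ is defined as the largest positive integer $\sigma$ for which there exist a core-free maximal subgroup $Y$ of $X$ and elements $s_1,\dots,s_\sigma\in S$ such that $Y^{s_1}\cap S > Y^{s_1}\cap Y^{s_2}\cap S > \dots > Y^{s_1}\cap Y^{s_2}\cap\dots\cap Y^{s_\sigma}\cap S$ (strict inclusions). *)

From mathcomp Require Import all_boot all_fingroup all_solvable.
Set Implicit Arguments. Unset Strict Implicit. Unset Printing Implicit Defensive.
Local Open Scope group_scope.

Definition socle (gT : finGroupType) (X : {set gT}) : {set gT} :=
  << \bigcup_(N : {group gT} | minnormal N X) N >>.

(* X is almost simple: it has a nonabelian simple normal subgroup S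
   with trivial centraliser in X (equivalently S <= X <= Aut(S)). *)
Definition almost_simple (gT : finGroupType) (X : {group gT}) : Prop :=
  exists S : {group gT},
    [/\ S <| X, simple S, ~~ abelian S & 'C_X(S) = 1].

(* I_j = Y^{s_0} ∩ ... ∩ Y^{s_j} ∩ S  (0-indexed) *)
Definition chain_term (gT : finGroupType) (S Y : {set gT}) (s : seq gT) (j : nat)
  : {set gT} :=
  (\bigcap_(i < j.+1) (Y :^ nth 1 s i)) :&: S.

Definition strict_chain (gT : finGroupType) (S Y : {set gT}) (s : seq gT) : bool :=
  all (fun x => x \in S) s &&
  [forall j : 'I_(size s), (j.+1 < size s) ==>
     (chain_term S Y s j.+1 \proper chain_term S Y s j)].

Definition sigma_attained (gT : finGroupType) (X S : {set gT}) (k : nat) : bool :=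
  [exists Y : {group gT}, exists t : k.-tuple gT,
     [&& maximal Y X, gcore Y X == 1 & strict_chain S Y t]].

(* sigma(X): the largest positive k attained; a strict chain of subsets of S
   containing 1 has at most #|S| <= #|X| terms, so the bound is harmless. *)
Definition sigma (gT : finGroupType) (X S : {set gT}) : nat :=
  \max_(k < #|X|.+1 | (0 < k) && sigma_attained X S k) k.

From mathcomp Require Import all_boot all_fingroup all_solvable.
From mathcomp Require Import vcharacter.

(* For a Sylow subgroup
   P of S0 the Frattini argument X = S0 N_X(P) yields a maximal subgroup
   Y >= N_X(P) with Y S0 = X; then Y is core-free, 1 < Y :&: S0 < S0 and
   N_S0(Y :&: S0) <= Y.  If every S0-conjugate of Y met Y :&: S0 trivially or
   contained it, Y :&: S0 would be a Frobenius complement in S0 and the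
   Frobenius kernel would contradict simplicity; hence some a in S0 gives
   1 < Y :&: Y^a :&: S0 < Y :&: S0.  As Y is core-free and X = Y S0, the
   conjugates Y^b (b in S0) intersect trivially, so some Y^b cuts
   Y :&: Y^a :&: S0 down once more. *)

Set Implicit Arguments. Unset Strict Implicit. Unset Printing Implicit Defensive.
Local Open Scope group_scope.

Section Preliminaries.

Variable gT : finGroupType.
Implicit Types G H K : {group gT}.

Lemma nonabelian_card_gt2 G : ~~ abelian G -> 2 < #|G|.
Proof.
apply: contraR; rewrite -leqNgt => leG2.
have [/card_le1_trivg -> | gt1G] := leqP #|G| 1; first exact: abelian1.
apply/cyclic_abelian/prime_cyclic.
by have -> : #|G| = 2 by apply/eqP; rewrite eqn_leq leG2.
Qed.

Lemma simple_nonabelian_nonsolvable G :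
  simple G -> ~~ abelian G -> ~~ solvable G.
Proof.
move=> simG; apply: contra => solG.
exact/cyclic_abelian/prime_cyclic/simple_sol_prime.
Qed.

Lemma simple_normal_nontrivial G H : simple G -> H <| G -> H :!=: 1 -> H :=: G.
Proof. by case/simpleP=> _ simG /simG[->|//]; rewrite eqxx. Qed.

Lemma simple_minnormal G H : simple G -> G <| H -> minnormal G H.
Proof.
move=> simG /andP[sGH nGH]; apply/mingroupP; split.
  by have [ntG _] := simpleP _ simG; rewrite ntG nGH.
move=> M /andP[ntM nMH] sMG; apply: simple_normal_nontrivial => //.
by rewrite /normal sMG (subset_trans sGH nMH).
Qed.

Lemma norms_TI_cent H K :
  H \subset 'N(K) -> K \subset 'N(H) -> H :&: K = 1 -> H \subset 'C(K).
Proof.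
move=> nKH nHK tiHK; apply/commG1P/trivgP; rewrite -tiHK.
by apply: commg_subI; rewrite subsetI subxx.
Qed.

(* The existence of the Frobenius kernel is Frobenius' theorem, proved with
   characters in vcharacter. *)
Lemma simple_not_Frobenius G H : simple G -> ~~ [Frobenius G with complement H].
Proof.
move=> simG; apply/negP => /Frobenius_kernel_exists[K frobK].
have [/sdprod_context[nsKG _ _ _ _] ntK _ ltKG _] := Frobenius_context frobK.
by rewrite (simple_normal_nontrivial simG nsKG ntK) properE subxx in ltKG.
Qed.

Lemma simple_nonTI_conj G H :
  simple G -> H \subset G -> H :!=: 1 -> H :!=: G ->
  exists2 g, g \in G :\: H & H :&: H :^ g :!=: 1.
Proof.
move=> simG sHG ntH neHG.
have [g /andP[gGH ntHHg] | noTI] :=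
  pickP [pred g | (g \in G :\: H) && (H :&: H :^ g != 1)]; first by exists g.
have /negP[] := simple_not_Frobenius H simG.
rewrite /Frobenius_group_with_complement neHG; apply/normedTI_P; split.
- by rewrite setD_eq0 subG1.
- by rewrite subsetI sHG normD1 normG.
move=> g Gg; apply: contraR => Hg.
have /negbT := noTI g; rewrite /= inE Hg Gg negbK => /eqP tiHHg.
by rewrite -setI_eq0 conjD1g -setDIl setD_eq0 tiHHg.
Qed.

End Preliminaries.

Section Chains.

Variable gT : finGroupType.
Implicit Types (A B T : {set gT}) (X S Y : {group gT}).

Lemma proper_setI_drop T A B S :
  T \subset S -> ~~ (A :&: T \subset B) -> A :&: B :&: S \proper A :&: S.
Proof.
move=> sTS nsATB; rewrite properE setSI ?subsetIl //=.
apply: contra nsATB => sASB; apply: subset_trans (subsetIr A B).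
exact: subset_trans (setIS A sTS) (subset_trans sASB (subsetIl _ S)).
Qed.

Lemma strict_chain3 T S Y a b :
  T \subset S -> a \in S -> b \in S ->
  ~~ (Y :&: T \subset Y :^ a) -> ~~ (Y :&: Y :^ a :&: T \subset Y :^ b) ->
  strict_chain S Y [:: 1; a; b].
Proof.
move=> sTS Sa Sb nsYa nsYab; rewrite /strict_chain /= group1 Sa Sb /=.
apply/forallP => -[[|[|j]] _] //=.
all: rewrite /chain_term !big_ord_recr !big_ord0 /= setTI conjsg1.
  exact: proper_setI_drop nsYa.
exact: proper_setI_drop nsYab.
Qed.

Lemma sigma_attained_leq X S k :
  0 < k <= #|X| -> sigma_attained X S k -> k <= sigma X S.
Proof.
case/andP=> k_gt0 le_kX attk.
have lt_kX1 : k < #|X|.+1 by [].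
apply: (leq_bigmax_cond (F := fun i : 'I_#|X|.+1 => val i) (Ordinal lt_kX1)).
by rewrite k_gt0.
Qed.

End Chains.

Section AlmostSimple.

Variables (gT : finGroupType) (X S0 : {group gT}).
Hypotheses (nsS0X : S0 <| X) (simS0 : simple S0) (nabS0 : ~~ abelian S0).
Hypothesis cXS0 : 'C_X(S0) = 1.

Let sS0X : S0 \subset X := normal_sub nsS0X.
Let nS0X : X \subset 'N(S0) := normal_norm nsS0X.

Lemma normal_simple_sub (H : {group gT}) :
  H \subset S0 -> X \subset 'N(H) -> H :!=: 1 -> H :=: S0.
Proof.
move=> sHS0 nHX; apply: simple_normal_nontrivial => //.
by rewrite /normal sHS0 (subset_trans sS0X nHX).
Qed.

Lemma exists_maximal_meeting_simple :
  exists Y : {group gT}, [/\ maximal Y X, ~~ (S0 \subset Y) & Y :&: S0 :!=: 1].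
Proof.
pose p := pdiv #|S0|.
have [P sylP] := Sylow_exists p S0.
have sPS0 : P \subset S0 := pHall_sub sylP.
have ntP : P :!=: 1.
  rewrite -cardG_gt1 (card_Hall sylP) p_part_gt1 pi_pdiv cardG_gt1.
  by have [] := simpleP _ simS0.
have nPX : ~~ (X \subset 'N(P)).
  apply: contra (simple_nonabelian_nonsolvable simS0 nabS0) => nPX.
  have <- := normal_simple_sub sPS0 nPX ntP.
  exact: pgroup_sol (pHall_pgroup sylP).
have [defN | [Y maxY sNY]] := maximal_exists (subsetIl X 'N(P)).
  by rewrite -defN subsetIr in nPX.
exists Y; split=> //.
  apply: contra (proper_subn (maxgroupp maxY)) => sS0Y.
  by rewrite -(Frattini_arg nsS0X sylP) mul_subG.
apply: contraNneq ntP => tiYS0; rewrite -subG1 -tiYS0 subsetI sPS0 andbT.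
by apply: subset_trans sNY; rewrite subsetI (subset_trans sPS0 sS0X) normG.
Qed.

Section CoreFreeMaximal.

Variable Y : {group gT}.
Hypotheses (maxY : maximal Y X) (nsS0Y : ~~ (S0 \subset Y)).
Hypothesis ntYS0 : Y :&: S0 :!=: 1.

Let sYX : Y \subset X := proper_sub (maxgroupp maxY).
Let nS0Y : Y \subset 'N(S0) := subset_trans sYX nS0X.

Lemma maximal_mul_simple : Y * S0 = X.
Proof.
rewrite (normC nS0Y) -norm_joinEr //; apply/eqP.
rewrite eqEproper join_subG sS0X sYX /=.
apply: contra nsS0Y => ltJX; have [_ maxYP] := maxgroupP maxY.
by rewrite -(maxYP _ ltJX) ?joing_subl ?joing_subr.
Qed.

Lemma gcore_maximal_trivial : gcore Y X :=: 1.
Proof.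
have sCY : gcore Y X \subset Y := gcore_sub Y X.
have sCX : gcore Y X \subset X := subset_trans sCY sYX.
have nCX : X \subset 'N(gcore Y X) := gcore_norm Y X.
have tiCS0 : gcore Y X :&: S0 = 1.
  apply/eqP; apply: contraR nsS0Y => ntCS0.
  have nCS0X : X \subset 'N(gcore Y X :&: S0) by rewrite normsI.
  rewrite -(normal_simple_sub (subsetIr _ _) nCS0X ntCS0).
  exact: subset_trans (subsetIl _ _) sCY.
apply/eqP; rewrite -subG1 -cXS0 subsetI sCX /=.
apply: norms_TI_cent tiCS0.
  exact: subset_trans sCX nS0X.
exact: subset_trans sS0X nCX.
Qed.

Lemma norm_meet_simple_sub : 'N_S0(Y :&: S0) \subset Y.
Proof.
have sYN : Y \subset 'N_X(Y :&: S0) by rewrite subsetI sYX normsI ?normG ?nS0Y.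
have ltNX : 'N_X(Y :&: S0) \proper X.
  rewrite properEneq subsetIl andbT; apply: contra nsS0Y => /eqP defN.
  have nYS0X : X \subset 'N(Y :&: S0) by rewrite -defN subsetIr.
  by rewrite -(normal_simple_sub (subsetIr _ _) nYS0X ntYS0) subsetIl.
have [_ maxYP] := maxgroupP maxY.
by rewrite -{2}(maxYP _ ltNX sYN) setSI.
Qed.

Lemma sub_conj_simple_core (A : {set gT}) :
  (forall s, s \in S0 -> A \subset Y :^ s) -> A \subset gcore Y X.
Proof.
move=> sAYS0; apply/bigcapsP => x; rewrite -maximal_mul_simple.
by case/mulsgP=> y s Yy S0s ->; rewrite conjsgM (conjGid Yy) sAYS0.
Qed.

Lemma exists_conj_not_sup (A : {group gT}) :
  A :!=: 1 -> exists2 b, b \in S0 & ~~ (A \subset Y :^ b).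
Proof.
move=> ntA.
have [b /andP[S0b nsAYb] | sAY] := pickP [pred b in S0 | ~~ (A \subset Y :^ b)].
  by exists b.
case/negP: ntA; rewrite -subG1 -gcore_maximal_trivial.
apply: sub_conj_simple_core => s S0s.
by have := sAY s; rewrite /= S0s /= => /negbFE.
Qed.

Lemma exists_conj_nonTI_not_sup :
  exists2 a, a \in S0 &
    (Y :&: Y :^ a :&: S0 :!=: 1) && ~~ (Y :&: S0 \subset Y :^ a).
Proof.
have neYS0 : Y :&: S0 :!=: S0.
  by apply: contra nsS0Y => /eqP <-; rewrite subsetIl.
have [a /setDP[S0a YS0'a] ntYS0a] :=
  simple_nonTI_conj simS0 (subsetIr Y S0) ntYS0 neYS0.
have conjYS0 : (Y :&: S0) :^ a = Y :^ a :&: S0 by rewrite conjIg (conjGid S0a).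
exists a => //; apply/andP; split.
  by rewrite conjYS0 setIACA setIid in ntYS0a.
apply: contra YS0'a => sYS0Ya.
have nYS0a : a \in 'N(Y :&: S0).
  apply/normP/eqP; rewrite eq_sym eqEcard cardJg leqnn andbT conjYS0.
  by rewrite subsetI sYS0Ya subsetIr.
by rewrite inE S0a andbT (subsetP norm_meet_simple_sub) // inE S0a.
Qed.

Lemma sigma_attained_maximal (S : {group gT}) :
  S0 \subset S -> sigma_attained X S 3.
Proof.
move=> sS0S; have [a S0a /andP[ntYYaS0 nsYS0a]] := exists_conj_nonTI_not_sup.
have [b S0b nsYYaS0b] := exists_conj_not_sup ntYYaS0.
apply/existsP; exists Y; apply/existsP; exists [tuple 1; a; b].
rewrite maxY gcore_maximal_trivial eqxx /=.
by rewrite (strict_chain3 sS0S _ _ nsYS0a nsYYaS0b) ?(subsetP sS0S).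
Qed.

End CoreFreeMaximal.

Lemma sigma_attained_almost_simple (S : {group gT}) :
  S0 \subset S -> sigma_attained X S 3.
Proof.
have [Y [maxY nsS0Y ntYS0]] := exists_maximal_meeting_simple.
exact: sigma_attained_maximal maxY nsS0Y ntYS0 S.
Qed.

End AlmostSimple.

Theorem mainTheorem7 (gT : finGroupType) (X S : {group gT}) :
  almost_simple X -> S :=: socle X -> 3 <= sigma X S.
Proof.
move=> [S0 [nsS0X simS0 nabS0 cXS0]] defS.
have sS0S : S0 \subset S.
  by rewrite defS sub_gen // (bigcup_sup S0) ?simple_minnormal.
apply: sigma_attained_leq; last exact: sigma_attained_almost_simple sS0S.
by rewrite (leq_trans (nonabelian_card_gt2 nabS0)) ?subset_leq_card ?normal_sub.
Qed.
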